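(* Let $\Pi=\{p_1,\ldots,p_N\}$ be a finite set of propositional symbols, and write $p_{N+1}=\top$ and $p_{N+2}=\bot$. Let $P$ be an SD-program over $\Pi$ that contains, for each $i\in\{1,\ldots,N\}$, a (necessarily unique) definite clause $C_i$ with $\mathrm{head}(C_i)=p_i$. Let $H_P$ be the $(N+2)\times(N+2)$ head matrix of $P$ (which is the identity matrix $I_{N+2}$) and $B_P$ the $(N+2)\times(N+2)$ body matrix of $P$. Let $Q$ be a query and $\bm{q}\in\mathbb{R}^{N+2}$ its representing vector. Then the vector \[ H\big(\mathrm{Attention}(\bm{q},H_P,B_P)\big)=H\Big(\mathrm{hardmax}\big(\langle \bm{q},\bm{h}_1\rangle,\ldots,\langle \bm{q},\bm{h}_{N+2}\rangle\big)\,B_P\Big), \] where $\bm{h}_j$ denotes the $j$-th row of $H_P$, is the vector representing the query $Q'$ obtained from $Q$ by one-step top-down derivation with respect to $P$.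
   Context: A query (conjunction) is a formula $q_1\wedge\cdots\wedge q_n$ ($n\ge 1$) with mutually different $q_1,\ldots,q_n\in\Pi\cup\{\top,\bot\}$. A definite clause is a formula $p\leftarrow q_1\wedge\cdots\wedge q_n$ ($n\ge1$) with $p,q_1,\ldots,q_n\in\Pi$, or $p\leftarrow\top$, or $p\leftarrow\bot$, with $p\in\Pi$; $p$ is its head and the right-hand side ($q_1\wedge\cdots\wedge q_n$, $\top$, or $\bot$) its body. An SD-program is a finite set of definite clauses no two of which have the same head. Vector representations (in $\mathbb{R}^{N+2}$, coordinate $i$ corresponding to $p_i$): a query $Q$ is represented by $\bm{q}=(q_1,\ldots,q_{N+2})$ with $q_i=1$ if $p_i$ occurs in $Q$ and $q_i=0$ otherwise. For a clause $C$, the head vector $\bm{h}_C$ has $i$-th coordinate $1$ if $\mathrm{head}(C)=p_i$ and $0$ otherwise; the body vector $\bm{b}_C$ has $i$-th coordinate $1$ if $p_i$ occurs in $\mathrm{body}(C)$ and $0$ otherwise. Additionally $\bm{h}_\top=\bm{b}_\top$ is the $(N+1)$-th standard unit vector and $\bm{h}_\bot=\bm{b}_\bot$ is the $(N+2)$-th standard unit vector. The head matrix $H_P$ has rows $\bm{h}_{C_1},\ldots,\bm{h}_{C_N},\bm{h}_\top,\bm{h}_\bot$, and the body matrix $B_P$ has rows $\bm{b}_{C_1},\ldots,\bm{b}_{C_N},\bm{b}_\top,\bm{b}_\bot$. One-step top-down derivation: given a query $Q$, replace each symbol $p_i\in\Pi$ occurring in $Q$ by the body of the clause $C_i\in P$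 with head $p_i$, and each occurrence of $\top$ (resp. $\bot$) by $\top$ (resp. $\bot$); form the conjunction of all the resulting conjuncts and simplify by merging duplicate symbols into one, so that the resulting query $Q'$ consists of mutually different symbols. $\mathrm{hardmax}(x_1,\ldots,x_m)=(y_1,\ldots,y_m)$ where $y_i=1/M$ if $x_i$ is a maximum of $(x_1,\ldots,x_m)$ and $y_i=0$ otherwise, $M$ being the number of indices attaining the maximum. The attention function is $\mathrm{Attention}(\bm{q},K,V)=\mathrm{hardmax}(\langle\bm{q},\bm{k}_1\rangle,\ldots,\langle\bm{q},\bm{k}_m\rangle)\,V$, where $\bm{k}_j$ are the rows of $K$ (the row vector of weights multiplies $V$). $H$ is the dimension-wise Heaviside function $H((v_1,v_2,\ldots))=(H_0(v_1),H_0(v_2),\ldots)$ with $H_0(x)=1$ if $x>0$ and $H_0(x)=0$ otherwise. *)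

From mathcomp Require Import all_boot all_order all_algebra.
Set Implicit Arguments. Unset Strict Implicit. Unset Printing Implicit Defensive.
Import Order.TTheory GRing.Theory Num.Theory.
Local Open Scope ring_scope.

(* Symbols p_1..p_N, p_{N+1} = top, p_{N+2} = bot are indexed by 'I_N.+2:
   index i < N is the atom p_{i+1}, index N is top, index N+1 is bot. *)
Lemma leqN2 (N : nat) : (N <= N.+2)%N. Proof. by rewrite leqW. Qed.
Lemma ltN2 (N : nat) : (N < N.+2)%N. Proof. by []. Qed.

Definition atom {N : nat} (i : 'I_N) : 'I_N.+2 := widen_ord (leqN2 N) i.
Definition topS {N : nat} : 'I_N.+2 := Ordinal (ltN2 N).
Definition botS {N : nat} : 'I_N.+2 := ord_max.

Inductive body (N : nat) :=
| BAtoms of {set 'I_N}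
| BTop
| BBot.

Definition wf_body {N : nat} (b : body N) : bool :=
  if b is BAtoms A then A != set0 else true.

(* An SD-program containing, for each i < N, the unique clause C_i with head
   p_i; the program is given by the bodies of these clauses. *)
Definition program (N : nat) := 'I_N -> body N.

Definition body_syms {N : nat} (b : body N) : {set 'I_N.+2} :=
  match b with
  | BAtoms A => atom @: A
  | BTop => [set topS]
  | BBot => [set botS]
  end.

Definition unitv {R : nzRingType} {n : nat} (s : 'I_n) : 'rV[R]_n :=
  \row_k (k == s)%:R.
Definition setv {R : nzRingType} {n : nat} (A : {set 'I_n}) : 'rV[R]_n :=
  \row_k (k \in A)%:R.

Definition qvec {R : nzRingType} {N : nat} (Q : {set 'I_N.+2}) : 'rV[R]_N.+2 :=
  setv Q.

Definition body_vec {R : nzRingType} {N : nat} (b : body N) : 'rV[R]_N.+2 :=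
  setv (body_syms b).

Definition head_row {R : nzRingType} {N : nat} (j : 'I_N.+2) : 'rV[R]_N.+2 :=
  match @insub nat (fun k => (k < N)%N) 'I_N (val j) with
  | Some i => unitv (atom i)
  | None => if val j == N then unitv topS else unitv botS
  end.

Definition body_row {R : nzRingType} {N : nat} (P : program N) (j : 'I_N.+2)
  : 'rV[R]_N.+2 :=
  match @insub nat (fun k => (k < N)%N) 'I_N (val j) with
  | Some i => body_vec (P i)
  | None => if val j == N then unitv topS else unitv botS
  end.

Definition head_mx {R : nzRingType} (N : nat) : 'M[R]_N.+2 :=
  \matrix_(j, k) (head_row j) 0 k.
Definition body_mx {R : nzRingType} {N : nat} (P : program N) : 'M[R]_N.+2 :=
  \matrix_(j, k) (body_row P j) 0 k.

Definition is_argmax {R : realFieldType} {m : nat} (x : 'rV[R]_m) (i : 'I_m) : bool :=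
  [forall k, x 0 k <= x 0 i].
Definition hardmax {R : realFieldType} {m : nat} (x : 'rV[R]_m) : 'rV[R]_m :=
  \row_i (if is_argmax x i then (#|[set j | is_argmax x j]|%:R)^-1 else 0).

Definition dotv {R : nzRingType} {n : nat} (u v : 'rV[R]_n) : R :=
  \sum_(i < n) u 0 i * v 0 i.

Definition attention {R : realFieldType} {n m p : nat}
  (q : 'rV[R]_n) (K : 'M[R]_(m, n)) (V : 'M[R]_(m, p)) : 'rV[R]_p :=
  hardmax (\row_j dotv q (row j K)) *m V.

Definition H0 {R : realFieldType} (x : R) : R := if 0 < x then 1 else 0.
Definition heaviside {R : realFieldType} {m n : nat} (v : 'M[R]_(m, n)) : 'M[R]_(m, n) :=
  map_mx H0 v.

(* One-step top-down derivation: replace each p_i by body(C_i), top by top,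
   bot by bot, conjoin everything and merge duplicates (set union). *)
Definition replace_sym {N : nat} (P : program N) (s : 'I_N.+2) : {set 'I_N.+2} :=
  match @insub nat (fun k => (k < N)%N) 'I_N (val s) with
  | Some i => body_syms (P i)
  | None => if val s == N then [set topS] else [set botS]
  end.

Definition derive {N : nat} (P : program N) (Q : {set 'I_N.+2}) : {set 'I_N.+2} :=
  \bigcup_(s in Q) replace_sym P s.

(* Since every clause has its own head, the head matrix is the identity, so the
   attention scores are the query vector itself.  As a 0/1 vector of a nonempty
   query, its hardmax is the query vector scaled by the positive constant
   1/|Q|, which the Heaviside step ignores.  What remains is the Heaviside image
   of q B_P, whose k-th entry counts the symbols of Q whose replacement contains
   p_k; it is positive exactly on the union of these replacements. *)
From mathcomp Require Import all_boot all_order all_algebra.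
From mathcomp Require Import zify.
Import Order.TTheory GRing.Theory Num.Theory.
Local Open Scope ring_scope.

Lemma unitv_set1 (R : nzRingType) n (s : 'I_n) :
  unitv s = setv [set s] :> 'rV[R]_n.
Proof. by apply/rowP => k; rewrite !mxE in_set1. Qed.

Lemma head_row_unitv (R : nzRingType) N (j : 'I_N.+2) :
  head_row j = unitv j :> 'rV[R]_N.+2.
Proof.
rewrite /head_row; case: insubP => [i _ vi|].
  by congr unitv; apply: val_inj; rewrite /= vi.
rewrite -leqNgt => hj; case: eqP => hN; congr unitv; apply: val_inj => //=.
by move: hj hN; case: j => m hm /=; lia.
Qed.

Lemma head_mx1 (R : nzRingType) N : head_mx N = 1%:M :> 'M[R]_N.+2.
Proof. by apply/matrixP => j k; rewrite !mxE head_row_unitv !mxE eq_sym. Qed.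

Lemma body_mx_replace_sym (R : nzRingType) N (P : program N) :
  body_mx P = \matrix_(j, k) setv (replace_sym P j) 0 k :> 'M[R]_N.+2.
Proof.
apply/matrixP => j k; rewrite !mxE /body_row /replace_sym.
by case: insubP => [i _ _|_]; case: (val j == N); rewrite !mxE ?in_set1.
Qed.

Lemma dotv_row1 (R : nzRingType) n (u : 'rV[R]_n) (j : 'I_n) :
  dotv u (row j 1%:M) = u 0 j.
Proof.
rewrite /dotv (bigD1 j) //= big1 ?addr0 => [|i /negbTE nij].
  by rewrite !mxE eqxx mulr1.
by rewrite !mxE eq_sym nij mulr0.
Qed.

Lemma attention1 (R : realFieldType) n p (q : 'rV[R]_n) (V : 'M[R]_(n, p)) :
  attention q 1%:M V = hardmax q *m V.
Proof.
by rewrite /attention; congr (hardmax _ *m _); apply/rowP => j; rewrite mxE dotv_row1.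
Qed.

Lemma is_argmax_setv (R : realFieldType) n (A : {set 'I_n}) (i : 'I_n) :
  A != set0 -> is_argmax (setv A : 'rV[R]_n) i = (i \in A).
Proof.
case/set0Pn=> a aA; apply/forallP/idP => [/(_ a)|iA k]; rewrite !mxE.
  by rewrite aA; case: (i \in A); rewrite ?ler10.
by rewrite iA; case: (k \in A); rewrite ?ler01.
Qed.

Lemma hardmax_setv (R : realFieldType) n (A : {set 'I_n}) :
  A != set0 -> hardmax (setv A : 'rV[R]_n) = (#|A|%:R)^-1 *: setv A.
Proof.
move=> A0; have argmaxE : [set j | is_argmax (setv A : 'rV[R]_n) j] = A.
  by apply/setP => j; rewrite inE is_argmax_setv.
apply/rowP => i; rewrite !mxE argmaxE is_argmax_setv //.
by case: (i \in A); rewrite ?mulr1 ?mulr0.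
Qed.

Lemma heavisideZ (R : realFieldType) m n (c : R) (v : 'M[R]_(m, n)) :
  0 < c -> heaviside (c *: v) = heaviside v.
Proof. by move=> c0; apply/matrixP => i j; rewrite !mxE /H0 pmulr_rgt0. Qed.

Lemma heaviside_setv_mulmx (R : realFieldType) m n (A : {set 'I_m})
    (F : 'I_m -> {set 'I_n}) :
  heaviside (setv A *m \matrix_(j, k) setv (F j) 0 k : 'rV[R]_n)
  = setv (\bigcup_(j in A) F j).
Proof.
apply/rowP => k; rewrite /setv !mxE /H0.
under [X in 0 < X]eq_bigr => j _ do rewrite !mxE.
case: bigcupP => [[j jA kFj]|noj].
  rewrite (bigD1 j) //= jA kFj mulr1 ifT //.
  by rewrite ltr_pwDl // sumr_ge0 // => i _; rewrite mulr_ge0 ?ler0n.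
rewrite big1 ?ltxx // => j _.
by case: (boolP (j \in A)) => jA; case: (boolP (k \in F j)) => kFj;
  rewrite ?mul0r ?mulr0 //; case: noj; exists j.
Qed.

Theorem proposition1 (R : realFieldType) (N : nat) (P : program N)
  (Q : {set 'I_N.+2}) :
  (forall i, wf_body (P i)) -> Q != set0 ->
  heaviside (attention (qvec Q : 'rV[R]_N.+2) (head_mx N) (body_mx P))
  = qvec (derive P Q).
Proof.
move=> _ Q0.
have invQ_gt0 : 0 < (#|Q|%:R : R)^-1.
  by rewrite invr_gt0 ltr0n card_gt0.
rewrite head_mx1 attention1 /qvec hardmax_setv // -scalemxAl heavisideZ //.
by rewrite body_mx_replace_sym heaviside_setv_mulmx.
Qed.
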